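(* Let $H_1\in\mathbb{H}^{n\times n}$ and $H_2\in\mathbb{H}^{m\times m}$ be invertible Hermitian quaternion matrices defining indefinite inner products $[x,y]_1=y^*H_1x$ on $\mathbb{H}^n$ and $[x,y]_2=y^*H_2x$ on $\mathbb{H}^m$. Let $X,Y:\mathbb{H}^n\to\mathbb{H}^m$ be linear transformations (i.e. $X,Y\in\mathbb{H}^{m\times n}$). Then $Y$ can be written in the form $Y=UX$, where $U$ is an injective $H_2$-isometry from $\mathrm{Im}\,X$ to $\mathrm{Im}\,Y$, if and only if both $$Y^{[*]}Y=X^{[*]}X\qquad\text{and}\qquad \mathrm{Ker}\,X=\mathrm{Ker}\,Y$$ hold.
   Context: $\mathbb{H}$ denotes the real quaternions; $\mathbb{H}^n$ is regarded as a right vector space over $\mathbb{H}$ (scalars multiply from the right), and matrices act on column vectors by left multiplication. For a quaternion matrix $A$, $A^*$ is its conjugate transpose; $A$ is Hermitian if $A^*=A$. For $X:\mathbb{H}^n\to\mathbb{H}^m$, the $H_1$-$H_2$-adjoint $X^{[*]}:\mathbb{H}^m\to\mathbb{H}^n$ is defined by $[X^{[*]}y,x]_1=[y,Xx]_2$ for all $x,y$; equivalently $X^{[*]}=H_1^{-1}X^*H_2$ (and similarly for $Y$). For subspaces $V,W\subseteq\mathbb{H}^m$, a linear map $U:V\to W$ is an $H_2$-isometry if $[Ux,Uy]_2=[x,y]_2$ for all $x,y\in V$. *)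

From HB Require Import structures.
From mathcomp Require Import all_boot all_order all_algebra.
From mathcomp Require Import ring.
From mathcomp Require Import reals.
Set Implicit Arguments. Unset Strict Implicit. Unset Printing Implicit Defensive.
Import Order.TTheory GRing.Theory Num.Theory.
Local Open Scope ring_scope.

Section Quaternions.
Variable R : realType.

(* q = a + b i + c j + d k *)
Record quat := Quat { qa : R; qb : R; qc : R; qd : R }.

Definition quat2tup (q : quat) := (qa q, qb q, qc q, qd q).
Definition tup2quat (t : R * R * R * R) :=
  let: (a, b, c, d) := t in Quat a b c d.
Lemma quat2tupK : cancel quat2tup tup2quat. Proof. by case. Qed.

HB.instance Definition _ := Equality.copy quat (can_type quat2tupK).
HB.instance Definition _ := Choice.copy quat (can_type quat2tupK).

Definition qzero := Quat 0 0 0 0.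
Definition qone := Quat 1 0 0 0.
Definition qadd p q := Quat (qa p + qa q) (qb p + qb q) (qc p + qc q) (qd p + qd q).
Definition qopp p := Quat (- qa p) (- qb p) (- qc p) (- qd p).
(* Hamilton product: i^2 = j^2 = k^2 = ijk = -1 *)
Definition qmul p q := Quat
  (qa p * qa q - qb p * qb q - qc p * qc q - qd p * qd q)
  (qa p * qb q + qb p * qa q + qc p * qd q - qd p * qc q)
  (qa p * qc q - qb p * qd q + qc p * qa q + qd p * qb q)
  (qa p * qd q + qb p * qc q - qc p * qb q + qd p * qa q).
Definition qconj p := Quat (qa p) (- qb p) (- qc p) (- qd p).

Lemma qaddA : associative qadd.
Proof. by case=> ? ? ? ?; case=> ? ? ? ?; case=> ? ? ? ?; rewrite /qadd /=; congr Quat; ring. Qed.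
Lemma qaddC : commutative qadd.
Proof. by case=> ? ? ? ?; case=> ? ? ? ?; rewrite /qadd /=; congr Quat; ring. Qed.
Lemma qadd0 : left_id qzero qadd.
Proof. by case=> ? ? ? ?; rewrite /qadd /=; congr Quat; ring. Qed.
Lemma qaddN : left_inverse qzero qopp qadd.
Proof. by case=> ? ? ? ?; rewrite /qadd /=; congr Quat; ring. Qed.

HB.instance Definition _ := GRing.isZmodule.Build quat qaddA qaddC qadd0 qaddN.

Lemma qmulA : associative qmul.
Proof. by case=> ? ? ? ?; case=> ? ? ? ?; case=> ? ? ? ?; rewrite /qmul /=; congr Quat; ring. Qed.
Lemma qmul1 : left_id qone qmul.
Proof. by case=> ? ? ? ?; rewrite /qmul /=; congr Quat; ring. Qed.
Lemma qmulr1 : right_id qone qmul.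
Proof. by case=> ? ? ? ?; rewrite /qmul /=; congr Quat; ring. Qed.
Lemma qmulDl : left_distributive qmul qadd.
Proof. by case=> ? ? ? ?; case=> ? ? ? ?; case=> ? ? ? ?; rewrite /qmul /= /qadd /=; congr Quat; ring. Qed.
Lemma qmulDr : right_distributive qmul qadd.
Proof. by case=> ? ? ? ?; case=> ? ? ? ?; case=> ? ? ? ?; rewrite /qmul /= /qadd /=; congr Quat; ring. Qed.
Lemma qone_neq0 : qone != (0 : quat).
Proof. apply/eqP => /(congr1 qa) /= /eqP; by rewrite oner_eq0. Qed.

HB.instance Definition _ :=
  GRing.Zmodule_isNzRing.Build quat qmulA qmul1 qmulr1 qmulDl qmulDr qone_neq0.

End Quaternions.

Definition cT (R : realType) m n (A : 'M[quat R]_(m, n)) : 'M[quat R]_(n, m) :=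
  map_mx (@qconj R) A^T.

Definition qhermitian (R : realType) n (A : 'M[quat R]_n) : Prop := cT A = A.

(* right scalar multiplication on column vectors of H^n (right vector space) *)
Definition rscale (R : realType) n (v : 'cV[quat R]_n) (a : quat R) : 'cV[quat R]_n :=
  map_mx (fun x => x * a) v.

Definition ip (R : realType) n (H : 'M[quat R]_n) (x y : 'cV[quat R]_n) : 'M[quat R]_1 :=
  cT y *m H *m x.

(* H1-H2-adjoint X^[*] = H1^{-1} X^* H2, where H1i is the inverse of H1 *)
Definition hadj (R : realType) m n (H1i : 'M[quat R]_n) (H2 : 'M[quat R]_m)
  (X : 'M[quat R]_(m, n)) : 'M[quat R]_(n, m) := H1i *m cT X *m H2.

Definition Im (R : realType) m n (X : 'M[quat R]_(m, n)) (w : 'cV[quat R]_m) : Prop :=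
  exists v : 'cV[quat R]_n, w = X *m v.
Definition Ker (R : realType) m n (X : 'M[quat R]_(m, n)) (v : 'cV[quat R]_n) : Prop :=
  X *m v = 0.

Definition inj_isometry (R : realType) m (H : 'M[quat R]_m)
  (V W : 'cV[quat R]_m -> Prop) (U : 'cV[quat R]_m -> 'cV[quat R]_m) : Prop :=
  [/\ (forall x, V x -> W (U x)),
      (forall x y, V x -> V y -> U (x + y) = U x + U y),
      (forall x a, V x -> U (rscale x a) = rscale (U x) a),
      (forall x y, V x -> V y -> U x = U y -> x = y) &
      (forall x y, V x -> V y -> ip H (U x) (U y) = ip H x y)].

From HB Require Import structures.
From mathcomp Require Import all_boot all_order all_algebra.
From mathcomp Require Import reals ring.
From Stdlib Require Import ClassicalEpsilon.
Set Implicit Arguments. Unset Strict Implicit. Unset Printing Implicit Defensive.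
Import GRing.Theory.
Local Open Scope ring_scope.

(* Both conditions only involve the Gram matrix Y^* H2 Y = X^* H2 X (the
   adjoint condition is this identity multiplied on the left by H1^{-1}) and
   the kernels.  If Y = U X with U an injective isometry, the Gram matrices
   agree entrywise and U, being additive and injective, has trivial kernel.
   Conversely, equal kernels make X v |-> Y v a well-defined injective map on
   Im X, which is right linear, and equal Gram matrices make it an isometry. *)

Section FactorMap.
Variables (K : pzRingType) (m n : nat).
Implicit Types X Y : 'M[K]_(m, n).

Lemma ker_sub_mulmx_eq X Y :
  (forall v : 'cV_n, X *m v = 0 -> Y *m v = 0) ->
  forall a b : 'cV_n, X *m a = X *m b -> Y *m a = Y *m b.
Proof.
move=> kerXY a b /eqP; rewrite -subr_eq0 -mulmxBr => /eqP /kerXY /eqP.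
by rewrite mulmxBr subr_eq0 => /eqP.
Qed.

(* An arbitrary preimage under X is chosen; off Im X the value is junk. *)
Definition factor_map X Y (w : 'cV[K]_m) : 'cV[K]_m :=
  Y *m epsilon (inhabits 0) (fun v => w = X *m v).

Lemma factor_mapE X Y :
  (forall v : 'cV_n, X *m v = 0 -> Y *m v = 0) ->
  forall a : 'cV_n, factor_map X Y (X *m a) = Y *m a.
Proof.
move=> kerXY a; apply: ker_sub_mulmx_eq kerXY _ _ _.
exact/esym/(epsilon_spec (inhabits 0) (fun v => X *m a = X *m v) (ex_intro _ a erefl)).
Qed.

End FactorMap.

Section QuaternionMatrices.
Variable R : realType.
Implicit Types p q : quat R.

Lemma qconjD p q : qconj (p + q) = qconj p + qconj q.
Proof. by case: p => ? ? ? ?; case: q => ? ? ? ?; congr Quat; rewrite /= opprD. Qed.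

Lemma qconjM p q : qconj (p * q) = qconj q * qconj p.
Proof. by case: p => ? ? ? ?; case: q => ? ? ? ?; congr Quat; rewrite /=; ring. Qed.

Lemma qconj0 : qconj (0 : quat R) = 0.
Proof. by congr Quat; rewrite /= oppr0. Qed.

Lemma qconj1 : qconj (1 : quat R) = 1.
Proof. by congr Quat; rewrite /= oppr0. Qed.

Lemma cT_mulmx m n k (A : 'M[quat R]_(m, n)) (B : 'M[quat R]_(n, k)) :
  cT (A *m B) = cT B *m cT A.
Proof.
apply/matrixP => i j; rewrite !mxE (big_morph (@qconj R) qconjD qconj0).
by apply: eq_bigr => l _; rewrite !mxE qconjM.
Qed.

Lemma cT_delta n (i : 'I_n) : cT (delta_mx i 0 : 'cV[quat R]_n) = delta_mx 0 i.
Proof.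
apply/matrixP => a b; rewrite !mxE andbC.
by case: (_ && _); rewrite ?mulr1n ?mulr0n ?qconj1 ?qconj0.
Qed.

Lemma mulmx_rscale m n (A : 'M[quat R]_(m, n)) v a :
  A *m rscale v a = rscale (A *m v) a.
Proof.
apply/matrixP => i j; rewrite !mxE mulr_suml.
by apply: eq_bigr => l _; rewrite !mxE mulrA.
Qed.

Lemma sesquilinear_mx_inj n (M N : 'M[quat R]_n) :
  (forall v w : 'cV[quat R]_n, cT w *m M *m v = cT w *m N *m v) -> M = N.
Proof.
move=> eqMN; apply/matrixP => i j.
have := eqMN (delta_mx j 0) (delta_mx i 0).
by rewrite cT_delta -!rowE -!colE => /matrixP /(_ 0 0); rewrite !mxE.
Qed.

Definition gram m n (H : 'M[quat R]_m) (Z : 'M[quat R]_(m, n)) : 'M[quat R]_n :=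
  cT Z *m H *m Z.

Lemma ip_mulmx m n (H : 'M[quat R]_m) (Z : 'M[quat R]_(m, n)) v w :
  ip H (Z *m v) (Z *m w) = cT w *m gram H Z *m v.
Proof. by rewrite /ip /gram cT_mulmx !mulmxA. Qed.

Lemma hadj_mulmx_eq m n (H1 H1i : 'M[quat R]_n) (H2 : 'M[quat R]_m)
    (X Y : 'M[quat R]_(m, n)) :
  H1 *m H1i = 1%:M ->
  hadj H1i H2 Y *m Y = hadj H1i H2 X *m X <-> gram H2 Y = gram H2 X.
Proof.
have hadjE Z : hadj H1i H2 Z *m Z = H1i *m gram H2 Z by rewrite /gram !mulmxA.
move=> H1H1i; rewrite !hadjE; split=> [/(congr1 (mulmx H1)) | -> //].
by rewrite !mulmxA H1H1i !mul1mx.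
Qed.

Variables (m n : nat) (H : 'M[quat R]_m).
Implicit Types X Y : 'M[quat R]_(m, n).

Lemma inj_isometry_gram_ker X Y U :
  inj_isometry H (Im X) (Im Y) U -> (forall v, Y *m v = U (X *m v)) ->
  gram H Y = gram H X /\ (forall v, Ker X v <-> Ker Y v).
Proof.
case=> _ U_add _ U_inj U_ip YU.
have im0 : Im X 0 by exists 0; rewrite mulmx0.
have U0 : U 0 = 0.
  by have := U_add 0 0 im0 im0; rewrite addr0 -{1}(addr0 (U 0)) => /addrI.
split.
- apply: sesquilinear_mx_inj => v w; rewrite -!ip_mulmx !YU.
  by apply: U_ip; [exists v | exists w].
- move=> v; rewrite /Ker YU; split=> [-> // | Uv0].
  by apply: U_inj; rewrite ?U0 //; exists v.
Qed.

Lemma factor_map_inj_isometry X Y :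
  gram H Y = gram H X -> (forall v, Ker X v <-> Ker Y v) ->
  inj_isometry H (Im X) (Im Y) (factor_map X Y).
Proof.
move=> gramYX kerXY.
have UX := factor_mapE (fun v => proj1 (kerXY v)).
have kerYX v : Y *m v = 0 -> X *m v = 0 := proj2 (kerXY v).
split.
- by move=> _ [a ->]; rewrite UX; exists a.
- by move=> _ _ [a ->] [b ->]; rewrite -mulmxDr !UX mulmxDr.
- by move=> _ q [a ->]; rewrite -mulmx_rscale !UX mulmx_rscale.
- by move=> _ _ [a ->] [b ->]; rewrite !UX => /(ker_sub_mulmx_eq kerYX).
- by move=> _ _ [a ->] [b ->]; rewrite !UX !ip_mulmx gramYX.
Qed.

End QuaternionMatrices.

Theorem lemma4p1 (R : realType) (m n : nat)
  (H1 H1i : 'M[quat R]_n) (H2 H2i : 'M[quat R]_m)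
  (X Y : 'M[quat R]_(m, n)) :
  qhermitian H1 -> qhermitian H2 ->
  H1i *m H1 = 1%:M -> H1 *m H1i = 1%:M ->
  H2i *m H2 = 1%:M -> H2 *m H2i = 1%:M ->
  (exists U : 'cV[quat R]_m -> 'cV[quat R]_m,
      inj_isometry H2 (Im X) (Im Y) U /\ (forall v, Y *m v = U (X *m v)))
  <->
  (hadj H1i H2 Y *m Y = hadj H1i H2 X *m X /\ (forall v, Ker X v <-> Ker Y v)).
Proof.
move=> _ _ _ H1H1i _ _; rewrite (hadj_mulmx_eq _ _ _ H1H1i); split.
- by case=> U [isoU YU]; exact: inj_isometry_gram_ker isoU YU.
- case=> gramYX kerXY; exists (factor_map X Y); split.
    exact: factor_map_inj_isometry.
  by move=> v; rewrite factor_mapE // => a /kerXY.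
Qed.
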